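(* For generic $a$ ($a\neq1$) and $k$, define for $n\ge0$ \[ \boldsymbol{\alpha}_n(a,k,q)=\frac{(-1)^na^nq^{n(3n-1)/2}(1-aq^{2n})(a;q)_n}{(1-a)(q;q)_n},\qquad \boldsymbol{\beta}_n(a,k,q)=(k;q)_n\sum_{j=0}^n\frac{(-1)^jk^jq^{\binom j2+nj}(k/a;q)_{n-j}}{(q;q)_j(q;q)_{n-j}}. \] Then $(\boldsymbol{\alpha}_n,\boldsymbol{\beta}_n)$ is a WP-Bailey pair relative to $a$ with parameter $k$.
   Context: Notation: $(x;q)_n=\prod_{i=0}^{n-1}(1-xq^i)$. A pair of sequences $(\boldsymbol{\alpha}_n(a,k,q),\boldsymbol{\beta}_n(a,k,q))_{n\ge0}$ is a WP-Bailey pair (relative to $a$, with parameter $k$) if $\boldsymbol{\alpha}_0=1$ and for all $n\ge0$ \[\boldsymbol{\beta}_n=\sum_{j=0}^n\frac{(k/a;q)_{n-j}(k;q)_{n+j}}{(q;q)_{n-j}(aq;q)_{n+j}}\boldsymbol{\alpha}_j.\] *)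

(* identities of q-series as rational-function identities,
   stated over an arbitrary field with nonvanishing denominators. *)
From HB Require Import structures.
From mathcomp Require Import all_boot all_order all_algebra.
Set Implicit Arguments. Unset Strict Implicit. Unset Printing Implicit Defensive.
Import Order.TTheory GRing.Theory Num.Theory.
Local Open Scope ring_scope.

Definition qpoch (F : fieldType) (x q : F) (n : nat) : F :=
  \prod_(i < n) (1 - x * q ^+ i).

Definition WP_Bailey_pair (F : fieldType) (a k q : F)
  (alpha beta : nat -> F) : Prop :=
  alpha 0%N = 1 /\
  forall n : nat,
    beta n = \sum_(j < n.+1)
      (qpoch (k / a) q (n - j) * qpoch k q (n + j)
        / (qpoch q q (n - j) * qpoch (a * q) q (n + j))) * alpha j.

Definition alpha17 (F : fieldType) (a k q : F) (n : nat) : F :=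
  (-1) ^+ n * a ^+ n * q ^+ ((n * (3 * n - 1)) %/ 2) * (1 - a * q ^+ (2 * n))
    * qpoch a q n / ((1 - a) * qpoch q q n).

Definition beta17 (F : fieldType) (a k q : F) (n : nat) : F :=
  qpoch k q n * \sum_(j < n.+1)
    ((-1) ^+ j * k ^+ j * q ^+ ('C(j, 2) + n * j) * qpoch (k / a) q (n - j)
      / (qpoch q q j * qpoch q q (n - j))).

From HB Require Import structures.
From mathcomp Require Import all_boot all_order all_algebra.
From mathcomp Require Import zify ring.
Import GRing.Theory.
Local Open Scope ring_scope.
Set Implicit Arguments. Unset Strict Implicit.

(* Fix a and q and regard both beta_n(k) and the right-hand side
   R_n(k) = sum_j c_{nj}(k) alpha_j of the WP-Bailey relation as polynomials
   in k.  Both satisfy the contiguous relation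
     k (1 - k) f_m(kq) = a [(1 - k) f_{m+1}(kq) - (1 - k q^{2m+2}) f_{m+1}(k)],
   and at k = a only their top terms survive, which agree.  By induction on n
   the difference D = beta_{n+1} - R_{n+1} then satisfies
   (1 - k) D(kq) = (1 - k q^{2n+2}) D(k) and D(a) = 0, so it vanishes at every
   a q^i; as q is not a root of unity these are infinitely many points. *)

Section PolynomialFunctions.
Variable F : fieldType.

Definition polyfun (f : F -> F) := exists p : {poly F}, forall x, f x = p.[x].

Lemma polyfun_cst c : polyfun (fun _ => c).
Proof. by exists c%:P => x; rewrite hornerC. Qed.

Lemma polyfun_id : polyfun id.
Proof. by exists 'X => x; rewrite hornerX. Qed.

Lemma polyfunD f g : polyfun f -> polyfun g -> polyfun (fun x => f x + g x).
Proof. by move=> [p hp] [r hr]; exists (p + r) => x; rewrite hornerD hp hr. Qed.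

Lemma polyfunN f : polyfun f -> polyfun (fun x => - f x).
Proof. by move=> [p hp]; exists (- p) => x; rewrite hornerN hp. Qed.

Lemma polyfunM f g : polyfun f -> polyfun g -> polyfun (fun x => f x * g x).
Proof. by move=> [p hp] [r hr]; exists (p * r) => x; rewrite hornerM hp hr. Qed.

Lemma polyfunX f n : polyfun f -> polyfun (fun x => f x ^+ n).
Proof. by move=> [p hp]; exists (p ^+ n) => x; rewrite horner_exp hp. Qed.

Lemma polyfun_sum n (G : F -> 'I_n -> F) :
  (forall j, polyfun (G^~ j)) -> polyfun (fun x => \sum_(j < n) G x j).
Proof.
elim: n G => [|n IH] G hG; first by exists 0 => x; rewrite big_ord0 horner0.
have [p hp] := IH (fun x j => G x (widen_ord (leqnSn n) j)) (fun j => hG _).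
have [r hr] := hG ord_max.
by exists (p + r) => x; rewrite big_ord_recr hornerD -hp -hr.
Qed.

Lemma polyfun_prod n (G : F -> 'I_n -> F) :
  (forall j, polyfun (G^~ j)) -> polyfun (fun x => \prod_(j < n) G x j).
Proof.
elim: n G => [|n IH] G hG; first by exists 1 => x; rewrite big_ord0 hornerC.
have [p hp] := IH (fun x j => G x (widen_ord (leqnSn n) j)) (fun j => hG _).
have [r hr] := hG ord_max.
by exists (p * r) => x; rewrite big_ord_recr hornerM -hp -hr.
Qed.

Lemma polyfun_eq0 f (x : nat -> F) :
  polyfun f -> injective x -> (forall i, f (x i) = 0) -> forall y, f y = 0.
Proof.
move=> [p hp] x_inj fx0 y; rewrite hp.
have [->|p_neq0] := eqVneq p 0; first by rewrite horner0.
have := max_poly_roots (rs := map x (iota 0 (size p))) p_neq0.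
rewrite size_map size_iota ltnn => /(_ _ _)/notF[].
  by apply/allP => _ /mapP[i _ ->]; rewrite /root -hp fx0.
by rewrite map_inj_uniq // iota_uniq.
Qed.

End PolynomialFunctions.

Ltac polyfun := repeat first
  [ apply: polyfun_cst | apply: polyfun_id | apply: polyfunD | apply: polyfunN
  | apply: polyfunM | apply: polyfunX
  | apply: polyfun_sum => ? | apply: polyfun_prod => ? ].

Section GeometricPoints.
Variables (F : fieldType) (a q : F).
Hypotheses (a_neq0 : a != 0) (q_not_unity : forall m, q ^+ m.+1 != 1).

Lemma geometric_inj : q != 0 -> injective (fun i => a * q ^+ i).
Proof.
move=> q_neq0 i j /(mulfI a_neq0) eq_ij.
wlog le_ij : i j eq_ij / (i <= j)%N.
  by move=> wlog_ij; case: (leqP i j) => [|/ltnW] /wlog_ij->.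
move: eq_ij; have [d ->] : exists d, j = (i + d)%N by exists (j - i)%N; lia.
rewrite exprD -{1}[q ^+ i]mulr1 => /(mulfI (expf_neq0 i q_neq0)).
by case: d => [|d] /esym/eqP; rewrite ?addn0 // (negbTE (q_not_unity d)).
Qed.

Lemma polyfun_eq0_of_shift (D : F -> F) N :
  polyfun D -> (forall i, 1 - a * q ^+ i != 0) -> D a = 0 ->
  (forall y, (1 - y) * D (y * q) = (1 - y * q ^+ N.+1) * D y) ->
  forall y, D y = 0.
Proof.
move=> D_poly nz_geo Da0 D_shift.
(* For q = 0 the points a q^i collapse, but the relation reads D y = (1 - y) D 0. *)
have [q0 | q_neq0] := eqVneq q 0.
  move: D_shift (nz_geo 0%N); rewrite q0 expr0 mulr1 => D_shift nz1a.
  have D_affine y : D y = (1 - y) * D 0.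
    by have := D_shift y; rewrite !mulr0 expr0n /= mulr0 subr0 mul1r => ->.
  have /eqP : (1 - a) * D 0 = 0 by rewrite -D_affine.
  by rewrite mulf_eq0 (negbTE nz1a) => /eqP D00 y; rewrite D_affine D00 mulr0.
apply: (polyfun_eq0 D_poly (geometric_inj q_neq0)).
elim=> [|i IHi]; first by rewrite expr0 mulr1.
have /eqP := D_shift (a * q ^+ i); rewrite IHi mulr0 -mulrA -exprSr.
by rewrite mulf_eq0 (negbTE (nz_geo i)) => /eqP.
Qed.

End GeometricPoints.

Section QPochhammer.
Variable F : fieldType.
Implicit Types x q : F.

Lemma qpoch0 x q : qpoch x q 0 = 1.
Proof. by rewrite /qpoch big_ord0. Qed.

Lemma qpochSr x q n : qpoch x q n.+1 = qpoch x q n * (1 - x * q ^+ n).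
Proof. by rewrite /qpoch big_ord_recr. Qed.

Lemma qpochSl x q n : qpoch x q n.+1 = (1 - x) * qpoch (x * q) q n.
Proof.
rewrite /qpoch big_ord_recl expr0 mulr1; congr (_ * _).
by apply: eq_bigr => i _; rewrite exprS mulrA.
Qed.

Lemma qpoch1S q n : qpoch 1 q n.+1 = 0.
Proof. by rewrite qpochSl subrr mul0r. Qed.

Lemma qpoch_neq0_factor x q :
  (forall m, qpoch x q m != 0) -> forall n, 1 - x * q ^+ n != 0.
Proof. by move=> + n => /(_ n.+1); rewrite qpochSr mulf_eq0 negb_or => /andP[]. Qed.

End QPochhammer.

Lemma pentagonal_binomial n : ((n * (3 * n - 1)) %/ 2 = 'C(n, 2) + n * n)%N.
Proof.
have double_bin : (2 * 'C(n, 2) = n * (n - 1))%N.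
  by elim: n => // n IH; rewrite binS bin1 mulnDr IH; case: n {IH} => // n; nia.
have -> : (n * (3 * n - 1) = 2 * ('C(n, 2) + n * n))%N.
  by rewrite mulnDr double_bin; case: n {double_bin} => // n; nia.
by rewrite mulKn.
Qed.

Section WPBailey.
Variables (F : fieldType) (a q : F).
Hypotheses (a_neq0 : a != 0) (a_neq1 : a != 1)
  (qpoch_q_neq0 : forall m, qpoch q q m != 0)
  (qpoch_aq_neq0 : forall m, qpoch (a * q) q m != 0).

Let q_factor_neq0 := qpoch_neq0_factor qpoch_q_neq0.
Let aq_factor_neq0 := qpoch_neq0_factor qpoch_aq_neq0.

Lemma one_sub_a_neq0 : 1 - a != 0.
Proof. by rewrite subr_eq0 eq_sym. Qed.

Lemma one_sub_aqexp_neq0 i : 1 - a * q ^+ i != 0.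
Proof.
case: i => [|i]; first by rewrite expr0 mulr1 one_sub_a_neq0.
by rewrite exprS mulrA aq_factor_neq0.
Qed.

Lemma q_not_unity m : q ^+ m.+1 != 1.
Proof. by rewrite exprS eq_sym -subr_eq0 q_factor_neq0. Qed.

Definition contiguous (f : F -> nat -> F) := forall k m,
  k * (1 - k) * f (k * q) m =
  a * ((1 - k) * f (k * q) m.+1 - (1 - k * q ^+ (m.+1 + m.+1)) * f k m.+1).

Lemma contiguousB f g :
  contiguous f -> contiguous g -> contiguous (fun k n => f k n - g k n).
Proof. by move=> f_contig g_contig k m; rewrite mulrBr f_contig g_contig; ring. Qed.

Lemma contiguous_shift h n : contiguous h -> (forall k, h k n = 0) ->
  forall k, (1 - k) * h (k * q) n.+1 = (1 - k * q ^+ (n.+1 + n.+1)) * h k n.+1.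
Proof.
move=> h_contig h_eq0 k; apply/eqP.
by rewrite -subr_eq0 -(mulrI_eq0 _ (lregP a_neq0)) -h_contig h_eq0 mulr0.
Qed.

Definition wp_coef k n j := qpoch (k / a) q (n - j) * qpoch k q (n + j)
  / (qpoch q q (n - j) * qpoch (a * q) q (n + j)).

Definition wp_transform (alpha : nat -> F) k n :=
  \sum_(j < n.+1) wp_coef k n j * alpha j.

Lemma wp_coef_contiguous k m j : (j <= m)%N ->
  k * (1 - k) * wp_coef (k * q) m j =
  a * ((1 - k) * wp_coef (k * q) m.+1 j
       - (1 - k * q ^+ (m.+1 + m.+1)) * wp_coef k m.+1 j).
Proof.
move=> le_jm; rewrite /wp_coef subSn // addSn.
have -> : (m.+1 + m.+1 = (m - j).+1 + (m + j).+1)%N by lia.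
rewrite (qpochSl (k / a)) (qpochSl k) (qpochSr (k * q / a)) (qpochSr (k * q)).
set d := (m - j)%N; set e := (m + j)%N.
rewrite (qpochSr q q d) (qpochSr (a * q) q e) (mulrAC k a^-1 q) exprD !exprS.
by field; rewrite qpoch_q_neq0 qpoch_aq_neq0 q_factor_neq0 aq_factor_neq0 a_neq0.
Qed.

Lemma wp_coef_contiguous_top k m :
  (1 - k) * wp_coef (k * q) m.+1 m.+1 =
  (1 - k * q ^+ (m.+1 + m.+1)) * wp_coef k m.+1 m.+1.
Proof.
rewrite /wp_coef subnn !qpoch0 !mul1r mulrA -qpochSl qpochSr.
by field; rewrite qpoch_aq_neq0.
Qed.

Lemma wp_transform_contiguous alpha : contiguous (wp_transform alpha).
Proof.
move=> k m.
rewrite /wp_transform !(big_ord_recr m.+1) /= mulr_sumr.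
rewrite (eq_bigr (fun j : 'I_m.+1 =>
  a * ((1 - k) * (wp_coef (k * q) m.+1 j * alpha j)) -
  a * ((1 - k * q ^+ (m.+1 + m.+1)) * (wp_coef k m.+1 j * alpha j)))); last first.
  by move=> j _; rewrite mulrA wp_coef_contiguous; [ring | rewrite -ltnS].
have top : (1 - k) * (wp_coef (k * q) m.+1 m.+1 * alpha m.+1) =
    (1 - k * q ^+ (m.+1 + m.+1)) * (wp_coef k m.+1 m.+1 * alpha m.+1).
  by rewrite mulrA wp_coef_contiguous_top -mulrA.
by rewrite sumrB -!mulr_sumr !mulrDr top; ring.
Qed.

Lemma polyfun_wp_transform alpha n : polyfun (wp_transform alpha ^~ n).
Proof. by rewrite /wp_transform /wp_coef /qpoch; polyfun. Qed.

Lemma wp_transform0 alpha k : wp_transform alpha k 0 = alpha 0%N.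
Proof. by rewrite /wp_transform big_ord1 /wp_coef !qpoch0 !mul1r invr1 mul1r. Qed.

Lemma wp_bailey_pair_of_contiguous alpha beta :
  alpha 0%N = 1 -> contiguous beta -> (forall n, polyfun (beta^~ n)) ->
  (forall k, beta k 0%N = 1) -> (forall n, beta a n = wp_transform alpha a n) ->
  forall k, WP_Bailey_pair a k q alpha (beta k).
Proof.
move=> alpha0 beta_contig beta_poly beta0 beta_at_a.
pose D k n := beta k n - wp_transform alpha k n.
have D_contig : contiguous D := contiguousB beta_contig (wp_transform_contiguous alpha).
suff D_eq0 n k : D k n = 0.
  by move=> k; split=> // n; apply/eqP; rewrite -subr_eq0; apply/eqP/D_eq0.
elim: n k => [|n IH]; first by move=> k; rewrite /D wp_transform0 beta0 alpha0 subrr.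
apply: (polyfun_eq0_of_shift (N := (n + n.+1)%N) (D := D^~ n.+1) a_neq0 q_not_unity).
- exact/polyfunD/polyfunN/polyfun_wp_transform.
- exact: one_sub_aqexp_neq0.
- by rewrite /D beta_at_a subrr.
- by move=> y; rewrite -addSn; apply: contiguous_shift.
Qed.

Definition beta_term k n j := (-1) ^+ j * k ^+ j * q ^+ ('C(j, 2) + n * j)
  * qpoch (k / a) q (n - j) / (qpoch q q j * qpoch q q (n - j)).

Definition beta_sum k n := \sum_(j < n.+1) beta_term k n j.

Lemma beta17E k n : beta17 a k q n = qpoch k q n * beta_sum k n.
Proof. by []. Qed.

Definition beta_telescoper k n j := (1 - q ^+ j) * (-1) ^+ j * k ^+ j
  * q ^+ ('C(j, 2) + n * j) * qpoch (k * q / a) q (n - j)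
  / (qpoch q q j * qpoch q q (n - j)).

Lemma beta_term_contiguous k m j : (j <= m)%N ->
  a * ((1 - k * q ^+ m.+1) * beta_term (k * q) m.+1 j
       - (1 - k * q ^+ (m.+1 + m.+1)) * beta_term k m.+1 j) =
  k * beta_term (k * q) m j
  + a * (beta_telescoper k m.+1 j.+1 - beta_telescoper k m.+1 j).
Proof.
move=> le_jm; have [d ->] : exists d, m = (j + d)%N by exists (m - j)%N; lia.
rewrite /beta_term /beta_telescoper subSn ?leq_addr // subSS addKn.
have -> : ('C(j, 2) + (j + d).+1 * j = 'C(j, 2) + (j + d) * j + j)%N.
  by rewrite mulSn; lia.
have -> : ('C(j.+1, 2) + (j + d).+1 * j.+1
           = 'C(j, 2) + (j + d) * j + j + j + (j + d).+1)%N.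
  by rewrite binS bin1 mulSn !mulnS; lia.
rewrite (qpochSl (k / a)) (qpochSr (k * q / a)) (qpochSr q q d) (qpochSr q q j).
rewrite (mulrAC k a^-1 q) !exprD exprMn !exprS !exprD.
by field; rewrite !qpoch_q_neq0 !q_factor_neq0 a_neq0.
Qed.

Lemma beta_term_contiguous_top k m :
  a * ((1 - k * q ^+ m.+1) * beta_term (k * q) m.+1 m.+1
       - (1 - k * q ^+ (m.+1 + m.+1)) * beta_term k m.+1 m.+1) =
  - (a * beta_telescoper k m.+1 m.+1).
Proof.
rewrite /beta_term /beta_telescoper subnn !qpoch0 exprMn !(exprD q).
by field; rewrite qpoch_q_neq0.
Qed.

Lemma beta_sum_contiguous k m :
  a * ((1 - k * q ^+ m.+1) * beta_sum (k * q) m.+1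
       - (1 - k * q ^+ (m.+1 + m.+1)) * beta_sum k m.+1) =
  k * beta_sum (k * q) m.
Proof.
set c1 := 1 - k * q ^+ m.+1; set c2 := 1 - k * q ^+ (m.+1 + m.+1).
set H := beta_telescoper k m.+1.
have telescope : \sum_(j < m.+1) (H j.+1 - H j) = H m.+1.
  by rewrite -(big_mkord xpredT (fun j => H j.+1 - H j)) telescope_sumr //
    /H /beta_telescoper expr0 subrr !mul0r subr0.
rewrite /beta_sum !(big_ord_recr m.+1) /=.
set SA := \sum_(j < m.+1) _; set SB := \sum_(j < m.+1) _.
transitivity (a * (c1 * SA - c2 * SB) + a * (c1 * beta_term (k * q) m.+1 m.+1
    - c2 * beta_term k m.+1 m.+1)); first by ring.
rewrite beta_term_contiguous_top /SA /SB !mulr_sumr -sumrB mulr_sumr.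
rewrite (eq_bigr (fun j : 'I_m.+1 => k * beta_term (k * q) m j + a * (H j.+1 - H j)));
  last by move=> j _; rewrite beta_term_contiguous // -ltnS.
by rewrite big_split /= -!mulr_sumr telescope addrK.
Qed.

Lemma beta17_contiguous : contiguous (fun k n => beta17 a k q n).
Proof.
move=> k m.
have qpoch_kq : (1 - k) * qpoch (k * q) q m.+1
                = qpoch k q m.+1 * (1 - k * q ^+ m.+1).
  by rewrite -qpochSl qpochSr.
rewrite !beta17E; transitivity (qpoch k q m.+1 * (k * beta_sum (k * q) m)).
  by rewrite qpochSl; ring.
by rewrite -beta_sum_contiguous [(1 - k) * _]mulrA qpoch_kq; ring.
Qed.

Lemma qpoch_aa_eq0 n j : (j < n)%N -> qpoch (a / a) q (n - j) = 0.
Proof.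
move=> lt_jn; have -> : (n - j = (n - j).-1.+1)%N by lia.
by rewrite divff // qpoch1S.
Qed.

Lemma beta17_at_a n :
  beta17 a a q n = (-1) ^+ n * a ^+ n * q ^+ ('C(n, 2) + n * n)
                   * qpoch a q n / qpoch q q n.
Proof.
rewrite beta17E /beta_sum big_ord_recr /= big1 ?add0r; last first.
  by move=> j _; rewrite /beta_term qpoch_aa_eq0 // !mulr0 mul0r.
rewrite /beta_term subnn !qpoch0 !mulr1.
by field; rewrite qpoch_q_neq0.
Qed.

Lemma wp_transform_alpha17_at_a k n :
  wp_transform (alpha17 a k q) a n = (-1) ^+ n * a ^+ n
    * q ^+ ('C(n, 2) + n * n) * qpoch a q n / qpoch q q n.
Proof.
rewrite /wp_transform big_ord_recr /= big1 ?add0r; last first.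
  by move=> j _; rewrite /wp_coef qpoch_aa_eq0 // !mul0r.
rewrite /wp_coef /alpha17 subnn !qpoch0 !mul1r pentagonal_binomial mul2n -addnn.
have -> : qpoch a q (n + n)
          = (1 - a) * qpoch (a * q) q (n + n) / (1 - a * q ^+ (n + n)).
  by rewrite -qpochSl qpochSr; field; rewrite one_sub_aqexp_neq0.
by field; rewrite qpoch_q_neq0 qpoch_aq_neq0 one_sub_aqexp_neq0 one_sub_a_neq0.
Qed.

Lemma alpha17_0 k : alpha17 a k q 0 = 1.
Proof. by rewrite /alpha17 !qpoch0 !expr0 !mulr1 !mul1r divff // one_sub_a_neq0. Qed.

Lemma beta17_0 k : beta17 a k q 0 = 1.
Proof. by rewrite beta17E /beta_sum big_ord1 /beta_term !qpoch0 !expr0 !mulr1 !mul1r invr1. Qed.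

End WPBailey.

Theorem mainTheorem17 (F : fieldType) (a k q : F)
  (ha0 : a != 0) (ha1 : a != 1)
  (hq : forall m : nat, qpoch q q m != 0)
  (haq : forall m : nat, qpoch (a * q) q m != 0) :
  WP_Bailey_pair a k q (alpha17 a k q) (beta17 a k q).
Proof.
apply: (wp_bailey_pair_of_contiguous ha0 ha1 hq haq
  (beta := fun k n => beta17 a k q n)).
- exact: alpha17_0.
- exact: beta17_contiguous.
- by move=> n; rewrite /beta17 /qpoch; polyfun.
- exact: beta17_0.
- by move=> n; rewrite beta17_at_a ?wp_transform_alpha17_at_a.
Qed.
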